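(* For $h\ge3$ the determinants satisfy $D_h-D_{h-1}+2z^3D_{h-2}-z^6D_{h-3}=0$. Moreover, with $z^3=t(1-t)^2$ and $W=\sqrt{4t-3t^2}$, for all $h\ge0$, \[ D_h=A r_1^h+Br_2^h+Cr_3^h, \] where $r_1=(t-1)^2$, $r_2=\tfrac t2(2-t+W)$, $r_3=\tfrac t2(2-t-W)$ are the roots of $X^3-X^2+2z^3X-z^6=0$, and \[ A=\frac{t-1}{3t-1},\qquad B=\frac{3t^2-4t-W}{(3t-1)(3t-4)},\qquad C=\frac{3t^2-4t+W}{(3t-1)(3t-4)}. \] (The identity holds as an identity of formal series in $t^{1/2}$, with $W=2t^{1/2}(1-3t/4)^{1/2}$.)
   Context: For $h\ge1$, $D_h=D_h(z)$ is the determinant of the $h\times h$ matrix $T_h$ (rows/columns indexed $0,\dots,h-1$) with entries $(T_h)_{p,p}=1$, $(T_h)_{p,p+1}=-2z$, $(T_h)_{p,p+2}=z^2$, $(T_h)_{p+1,p}=-z^2$, and all other entries $0$; $D_0=1$. (So $D_1=1$, $D_2=1-2z^3$.) *)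

From HB Require Import structures.
From mathcomp Require Import all_boot all_order all_algebra.
Set Implicit Arguments. Unset Strict Implicit. Unset Printing Implicit Defensive.
Import Order.TTheory GRing.Theory Num.Theory.
Local Open Scope ring_scope.

Definition Tmat (R : comPzRingType) (h : nat) (z : R) : 'M[R]_h :=
  \matrix_(p < h, q < h)
     if (q == p :> nat) then 1
     else if (q == p.+1 :> nat) then - (2%:R * z)
     else if (q == p.+2 :> nat) then z ^+ 2
     else if (p == q.+1 :> nat) then - (z ^+ 2)
     else 0.

(* D_h(z) = det T_h ; for h = 0 the empty determinant is 1, so D_0 = 1. *)
Definition D (R : comPzRingType) (h : nat) (z : R) : R := \det (Tmat h z).

From HB Require Import structures.
From mathcomp Require Import all_boot all_order all_algebra.
From mathcomp Require Import ring.
Set Implicit Arguments. Unset Strict Implicit. Unset Printing Implicit Defensive.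
Import Order.TTheory GRing.Theory Num.Theory.
Local Open Scope ring_scope.

(* Recurrence: let E_h(a,b,c) be the determinant of T_h with its first row
   replaced by (a, b, c, 0, ..., 0).  Expanding along the first column, whose
   only nonzero entries are a and -z^2, gives
     E_{n+2}(a,b,c) = a D_{n+1} + z^2 E_{n+1}(b,c,0),
   and iterating three times from D_{n+3} = E_{n+3}(1,-2z,z^2) yields
     D_{n+3} = D_{n+2} - 2z^3 D_{n+1} + z^6 D_n.
   Closed form: a sequence satisfying an order-3 linear recurrence is fixed
   by its first three terms, and n |-> r^n solves the recurrence whenever r
   is a root of its characteristic polynomial.  So it suffices to check that
   r1, r2, r3 are roots of X^3 - X^2 + 2z^3 X - z^6 and that the proposed
   combination matches D_0 = 1, D_1 = 1, D_2 = 1 - 2z^3; these are rational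
   identities in t and W, valid modulo z^3 = t(1-t)^2 and W^2 = 4t - 3t^2. *)

Section LinearRecurrence.
Variable R : comPzRingType.
Variables c1 c2 c3 : R.

Definition linrec3 (u : nat -> R) : Prop :=
  forall n, u n.+3 = c1 * u n.+2 + c2 * u n.+1 + c3 * u n.

Lemma linrec3_eq (u v : nat -> R) : linrec3 u -> linrec3 v ->
  u 0%N = v 0%N -> u 1%N = v 1%N -> u 2%N = v 2%N -> u =1 v.
Proof.
move=> recu recv e0 e1 e2.
suff window n : [/\ u n = v n, u n.+1 = v n.+1 & u n.+2 = v n.+2].
  by move=> n; case: (window n).
elim: n => [|n [en en1 en2]]; first by [].
by split=> //; rewrite recu recv en en1 en2.
Qed.

Lemma linrec3_geom (r : R) : r ^+ 3 = c1 * r ^+ 2 + c2 * r + c3 ->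
  linrec3 (fun n => r ^+ n).
Proof.
move=> root n; rewrite -addn3 exprD root !exprS; ring.
Qed.

Lemma linrec3_add (u v : nat -> R) : linrec3 u -> linrec3 v ->
  linrec3 (fun n => u n + v n).
Proof. by move=> recu recv n; rewrite recu recv; ring. Qed.

Lemma linrec3_scale (a : R) (u : nat -> R) : linrec3 u ->
  linrec3 (fun n => a * u n).
Proof. by move=> recu n; rewrite recu; ring. Qed.

End LinearRecurrence.

Section Determinant.
Variable R : comPzRingType.
Variable z : R.

Definition Tfirst (h : nat) (a b c : R) : 'M[R]_h :=
  \matrix_(p < h, q < h)
    if (p == 0%N :> nat) then
      (if (q == 0%N :> nat) then a else if (q == 1%N :> nat) then b
       else if (q == 2%N :> nat) then c else 0)
    else Tmat h z p q.

Definition E (h : nat) (a b c : R) : R := \det (Tfirst h a b c).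

Lemma D_E h : D h z = E h 1 (- (2%:R * z)) (z ^+ 2).
Proof.
rewrite /D /E; congr (\det _); apply/matrixP => i j; rewrite !mxE.
by case: (i : nat) => [|p] //=; case: (j : nat) => [|[|[|q]]].
Qed.

Lemma E1 a b c : E 1 a b c = a.
Proof. by rewrite /E det_mx11 mxE. Qed.

(* Expansion along the first column, whose nonzero entries are a and -z^2:
   the two minors are T_{n+1} and the matrix of E_{n+1}(b, c, 0). *)
Lemma E_expand n a b c : E n.+2 a b c = a * D n.+1 z + z ^+ 2 * E n.+1 b c 0.
Proof.
rewrite /E (expand_det_col _ ord0) big_ord_recl big_ord_recl big1; last first.
  by move=> i _; rewrite !mxE /= mul0r.
have minor0 : row' ord0 (col' ord0 (Tfirst n.+2 a b c)) = Tmat n.+1 z.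
  by apply/matrixP => i j; rewrite !mxE /= /bump /= !add1n.
have minor1 : row' (lift ord0 ord0) (col' ord0 (Tfirst n.+2 a b c))
              = Tfirst n.+1 b c 0.
  apply/matrixP => i j; rewrite !mxE /= /bump /=.
  case: i => [[|i] Hi] /=; first by case: j => [[|[|[|j]]] Hj].
  by rewrite !add1n.
rewrite addr0 /cofactor minor0 minor1 !mxE /= /D; ring.
Qed.

Lemma D0 : D 0 z = 1.
Proof. exact: det_mx00. Qed.

Lemma D1 : D 1 z = 1.
Proof. by rewrite D_E E1. Qed.

Lemma D2 : D 2 z = 1 - 2%:R * z ^+ 3.
Proof. rewrite D_E E_expand E1 D1; ring. Qed.

Lemma E_diag n a : E n.+1 a 0 0 = a * D n z.
Proof.
elim: n a => [|n IH] a; first by rewrite E1 D0 mulr1.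
by rewrite E_expand IH mul0r mulr0 addr0.
Qed.

Lemma D_linrec3 : linrec3 1 (- (2%:R * z ^+ 3)) (z ^+ 6) (fun n => D n z).
Proof. move=> n; rewrite [LHS]D_E !E_expand E_diag; ring. Qed.

End Determinant.

Lemma D_recurrence (R : comPzRingType) (z : R) (h : nat) : (3 <= h)%N ->
  D h z - D (h - 1)%N z + 2%:R * z ^+ 3 * D (h - 2)%N z
    - z ^+ 6 * D (h - 3)%N z = 0.
Proof.
case: h => [|[|[|n]]] // _; rewrite !subSS !subn0 D_linrec3; ring.
Qed.

Section ClosedForm.
Variable K : fieldType.
Variables z t W : K.
Hypothesis two_neq0 : 2%:R != 0 :> K.
Hypothesis z3E : z ^+ 3 = t * (1 - t) ^+ 2.
Hypothesis W2E : W ^+ 2 = 4%:R * t - 3%:R * t ^+ 2.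
Hypothesis t1_neq0 : 3%:R * t - 1 != 0.
Hypothesis t4_neq0 : 3%:R * t - 4%:R != 0.

Let r1 := (t - 1) ^+ 2.
Let r2 := t / 2%:R * (2%:R - t + W).
Let r3 := t / 2%:R * (2%:R - t - W).
Let A := (t - 1) / (3%:R * t - 1).
Let B := (3%:R * t ^+ 2 - 4%:R * t - W) / ((3%:R * t - 1) * (3%:R * t - 4%:R)).
Let C := (3%:R * t ^+ 2 - 4%:R * t + W) / ((3%:R * t - 1) * (3%:R * t - 4%:R)).

Lemma z6E : z ^+ 6 = (t * (1 - t) ^+ 2) ^+ 2.
Proof. by rewrite -z3E -exprM. Qed.

Lemma char_roots r : r \in [:: r1; r2; r3] ->
  r ^+ 3 - r ^+ 2 + 2%:R * z ^+ 3 * r - z ^+ 6 = 0.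
Proof.
rewrite !inE z6E z3E => /or3P[] /eqP ->; rewrite /r1 /r2 /r3.
- ring.
- by field: W2E.
- by field: W2E.
Qed.

Lemma root_linrec3 r : r \in [:: r1; r2; r3] ->
  linrec3 1 (- (2%:R * z ^+ 3)) (z ^+ 6) (fun n => r ^+ n).
Proof.
move=> /char_roots root; apply: linrec3_geom.
by apply/eqP; rewrite -subr_eq0 -root; apply/eqP; ring.
Qed.

Lemma D_closed_form h : D h z = A * r1 ^+ h + B * r2 ^+ h + C * r3 ^+ h.
Proof.
pose closed n := A * r1 ^+ n + B * r2 ^+ n + C * r3 ^+ n.
have closed_rec : linrec3 1 (- (2%:R * z ^+ 3)) (z ^+ 6) closed.
  have scaled_root r a : r \in [:: r1; r2; r3] ->
      linrec3 1 (- (2%:R * z ^+ 3)) (z ^+ 6) (fun n => a * r ^+ n).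
    by move=> /root_linrec3; apply: linrec3_scale.
  by do ?apply: linrec3_add; apply: scaled_root; rewrite !inE eqxx ?orbT.
apply: (linrec3_eq (D_linrec3 z) closed_rec); rewrite /closed /A /B /C.
- by rewrite D0; field; rewrite t1_neq0 t4_neq0.
- by rewrite D1 /r1 /r2 /r3; field: W2E; rewrite two_neq0 t1_neq0 t4_neq0.
- by rewrite D2 z3E /r1 /r2 /r3; field: W2E; rewrite two_neq0 t1_neq0 t4_neq0.
Qed.

End ClosedForm.

Theorem mainTheorem3 :
  (* recurrence, as an identity valid for z in any commutative ring
     (in particular for the indeterminate z in Z[z]) *)
  (forall (R : comPzRingType) (z : R) (h : nat), (3 <= h)%N ->
     D h z - D (h - 1)%N z + 2%:R * z ^+ 3 * D (h - 2)%N z - z ^+ 6 * D (h - 3)%N z = 0)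
  /\
  (* closed form, in any field of characteristic 0 containing z, t, W with
     z^3 = t(1-t)^2 and W^2 = 4t - 3t^2 (e.g. the field of formal Laurent
     series in which the paper's identity lives) *)
  (forall (K : fieldType) (z t W : K),
     [pchar K] =i pred0 ->
     z ^+ 3 = t * (1 - t) ^+ 2 ->
     W ^+ 2 = 4%:R * t - 3%:R * t ^+ 2 ->
     3%:R * t - 1 != 0 -> 3%:R * t - 4%:R != 0 ->
     let r1 := (t - 1) ^+ 2 in
     let r2 := t / 2%:R * (2%:R - t + W) in
     let r3 := t / 2%:R * (2%:R - t - W) in
     let A := (t - 1) / (3%:R * t - 1) in
     let B := (3%:R * t ^+ 2 - 4%:R * t - W) /
              ((3%:R * t - 1) * (3%:R * t - 4%:R)) in
     let C := (3%:R * t ^+ 2 - 4%:R * t + W) /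
              ((3%:R * t - 1) * (3%:R * t - 4%:R)) in
     (forall r, r \in [:: r1; r2; r3] ->
        r ^+ 3 - r ^+ 2 + 2%:R * z ^+ 3 * r - z ^+ 6 = 0) /\
     (forall h : nat, D h z = A * r1 ^+ h + B * r2 ^+ h + C * r3 ^+ h)).
Proof.
split; first exact: D_recurrence.
move=> K z t W char0 z3E W2E t1_neq0 t4_neq0.
have two_neq0 : 2%:R != 0 :> K by rewrite (pcharf0P _).1.
split.
- exact: char_roots.
- exact: D_closed_form.
Qed.
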